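(* Let $\mathbf R=\{R_i,t_i\}_{i\ge0}$ be a preperfectoid tower arising from a pair $(R,I_0)$, with $0$-th small tilt $R^{s.\flat}$ and ideal $I_0^{s.\flat}\subset R^{s.\flat}$. Then for every $i\ge0$ the ring homomorphism $R^{s.\flat}/(I_0^{s.\flat})^{p^i}\to R^{s.\flat}/(I_0^{s.\flat})^{p^{i+1}}$, $x\mapsto x^p$, induced by the absolute Frobenius of $R^{s.\flat}$, is injective.
   Context: Fix a prime $p$; rings are commutative with $1$. For a ring $A$, an ideal $I$ and an $A$-module $M$, $M_{I\text{-tor}}$ is the submodule of $x\in M$ such that for every $a\in I$ some $a^nx=0$; $\varphi_{I,A}\colon A_{I\text{-tor}}\to A/IA$ is inclusion followed by projection. $\varphi$ is absolute Frobenius. A tower of rings $\mathbf R=\{R_i,t_i\}_{i\ge0}$ is a sequence of ring maps $R_0\xrightarrow{t_0}R_1\to\cdots$. For a ring $R$ and ideal $I_0$, write $\overline{R_i}=R_i/I_0R_i$, $\overline{t_i}$ the induced maps. A purely inseparable tower arising from $(R,I_0)$: (a) $R_0=R$, $p\in I_0$; (b) each $\overline{t_i}$ injective; (c) $\varphi(\overline{R_{i+1}})\subset\overline{t_i}(\overline{R_i})$; then $F_i\colon\overline{R_{i+1}}\to\overline{R_i}$ is the unique ring map with $\overline{t_i}\circ F_i=\varphi$. A preperfectoid tower is a purely inseparable tower with: (d) each $F_i$ surjective; (f) $I_0$ principal and a principal ideal $I_1\subset R_1$ with $I_1^p=I_0R_1$ and $\ker F_i=I_1\overline{R_{i+1}}$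 for all $i$; (g) for all $i$, $I_0(R_i)_{I_0\text{-tor}}=0$ and a bijection $(F_i)_{\mathrm{tor}}\colon(R_{i+1})_{I_0\text{-tor}}\to(R_i)_{I_0\text{-tor}}$ with $\varphi_{I_0,R_i}\circ(F_i)_{\mathrm{tor}}=F_i\circ\varphi_{I_0,R_{i+1}}$. Small tilt: $R^{s.\flat}:=\varprojlim(\cdots\xrightarrow{F_1}\overline{R_1}\xrightarrow{F_0}\overline{R_0})$ and $I_0^{s.\flat}$ is the kernel of the projection $R^{s.\flat}\to R/I_0$. *)

From mathcomp Require Import all_boot all_algebra.
Set Implicit Arguments. Unset Strict Implicit. Unset Printing Implicit Defensive.
Import GRing.Theory.
Local Open Scope ring_scope.

Section Tower.
Variables (R : nat -> comPzRingType) (t : forall i, {rmorphism R i -> R i.+1}).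

Fixpoint tau0 (i : nat) : R 0%N -> R i :=
  match i return R 0%N -> R i with
  | 0 => fun x => x
  | j.+1 => fun x => t j (tau0 j x)
  end.

Fixpoint tau1 (i : nat) : R 1%N -> R i.+1 :=
  match i return R 1%N -> R i.+1 with
  | 0 => fun x => x
  | j.+1 => fun x => t j.+1 (tau1 j x)
  end.

(* Membership in the extended ideal I_0 R_i, where I_0 = varpi R_0 (principal). *)
Definition inI0 (varpi : R 0%N) (i : nat) (x : R i) : Prop :=
  exists r : R i, x = tau0 i varpi * r.

Definition inI1 (varpi1 : R 1%N) (i : nat) (x : R i.+1) : Prop :=
  exists r : R i.+1, x = tau1 i varpi1 * r.

(* F_i : R_(i+1)/I_0 -> R_i/I_0, described by its graph on representatives:
   F_i(class of x) = class of y  iff  tbar_i(class y) = (class x)^p,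
   i.e. t_i(y) - x^p lies in I_0 R_(i+1). *)
Definition Frel (p : nat) (varpi : R 0%N) (i : nat) (x : R i.+1) (y : R i) : Prop :=
  inI0 varpi (t i y - x ^+ p).

Definition I0tor (varpi : R 0%N) (i : nat) (x : R i) : Prop :=
  forall a : R i, inI0 varpi a -> exists n : nat, a ^+ n * x = 0.

Definition purely_inseparable_tower (p : nat) (varpi : R 0%N) : Prop :=
  inI0 varpi (p%:R : R 0%N) /\
  (* (b) tbar_i injective *)
  (forall i (x : R i), inI0 varpi (t i x) -> inI0 varpi x) /\
  (* (c) Frobenius of Rbar_(i+1) lands in the image of tbar_i *)
  (forall i (x : R i.+1), exists y : R i, Frel p varpi x y).

Definition preperfectoid_tower (p : nat) (varpi : R 0%N) : Prop :=
  purely_inseparable_tower p varpi /\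
  (* (d) F_i surjective *)
  (forall i (y : R i), exists x : R i.+1, Frel p varpi x y) /\
  (* (f) I_1 = varpi1 R_1 principal, I_1^p = I_0 R_1, ker F_i = I_1 Rbar_(i+1) *)
  (exists varpi1 : R 1%N,
     ((exists r : R 1%N, varpi1 ^+ p = t 0%N varpi * r) /\
      (exists r : R 1%N, t 0%N varpi = varpi1 ^+ p * r)) /\
     (forall i (x : R i.+1),
        Frel p varpi x 0 <->
        exists z : R i.+1, inI1 varpi1 z /\ inI0 varpi (x - z))) /\
  (forall i,
     (forall (a x : R i), inI0 varpi a -> I0tor varpi x -> a * x = 0) /\
     exists G : R i.+1 -> R i,
       (forall x, I0tor varpi x -> I0tor varpi (G x)) /\
       (forall x1 x2, I0tor varpi x1 -> I0tor varpi x2 -> G x1 = G x2 -> x1 = x2) /\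
       (forall y, I0tor varpi y -> exists x, I0tor varpi x /\ G x = y) /\
       (forall x, I0tor varpi x -> Frel p varpi x (G x))).

(* Small tilt R^{s.flat} = lim (Rbar_(i+1) --F_i--> Rbar_i), represented by
   compatible sequences of representatives x_i in R_i: F_i(xbar_(i+1)) = xbar_i.
   Ring operations are componentwise; two sequences represent the same element
   iff x_i - y_i in I_0 R_i for all i. *)
Definition tilt_elt (p : nat) (varpi : R 0%N) (x : forall i, R i) : Prop :=
  forall i, Frel p varpi (x i.+1) (x i).

Definition tilt_eq (varpi : R 0%N) (x y : forall i, R i) : Prop :=
  forall i, inI0 varpi (x i - y i).

(* I_0^{s.flat}: kernel of the projection R^{s.flat} -> R_0/I_0. *)
Definition in_I0flat (p : nat) (varpi : R 0%N) (x : forall i, R i) : Prop :=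
  tilt_elt p varpi x /\ inI0 varpi (x 0%N).

Definition in_I0flat_pow (p : nat) (varpi : R 0%N) (n : nat) (x : forall i, R i) : Prop :=
  exists (m : nat) (c : 'I_m -> forall i, R i) (a : 'I_m -> 'I_n -> forall i, R i),
    (forall k, tilt_elt p varpi (c k)) /\
    (forall k j, in_I0flat p varpi (a k j)) /\
    tilt_eq varpi x (fun i => \sum_(k < m) c k i * \prod_(j < n) a k j i).

End Tower.

(* Let w = (varpi, varpi1, varpi2, ...) be a compatible system of p-power roots of varpi in
   the tower; its k-th component has [p ^ k]-th power in I_0 R_k. The k-th projection
   R^{s.flat} -> R_k / I_0 R_k then has kernel exactly (I_0^{s.flat})^{p^k}. Indeed, every
   element of I_0^{s.flat} is divisible by w componentwise (because ker F_k = I_1), so a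
   product of p^k of them vanishes at level k. Conversely, a compatible sequence whose k-th
   component lies in I_0 R_k can be divided by w, [p ^ k] times, compatibly along the tower:
   at each level the quotient is only determined up to a multiple of a high power of w and an
   I_0-torsion element, and condition (g) lifts the torsion correction through the tower.
   Since (x^p)_(k+1) = t_k(x_k) modulo I_0, injectivity of Frobenius modulo these ideals
   reduces to the injectivity of t_k modulo I_0, condition (b). *)
From mathcomp Require Import all_boot all_algebra.
From mathcomp Require Import ring zify.
From Stdlib Require Import IndefiniteDescription.
Set Implicit Arguments. Unset Strict Implicit. Unset Printing Implicit Defensive.
Import GRing.Theory.
Local Open Scope ring_scope.

Lemma exprD_prime (S : comPzRingType) (p : nat) (a b : S) : prime p ->
  exists m, (a + b) ^+ p = a ^+ p + b ^+ p + p%:R * b * m.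
Proof.
move=> pP; have p2 := prime_gt1 pP.
case: p pP p2 => [|[|q]] // pP _.
rewrite exprDn big_ord_recr big_ord_recl /= subnn subn0 !expr0 mul1r mulr1 binn bin0 !mulr1n.
exists (\sum_(i < q.+1) a ^+ (q.+2 - (bump 0 i)) * b ^+ i *+ ('C(q.+2, bump 0 i) %/ q.+2)).
rewrite addrAC; congr (_ + _).
rewrite mulr_sumr; apply: eq_bigr => i _ /=.
have hd : (q.+2 %| 'C(q.+2, bump 0 i))%N.
  by apply: prime_dvd_bin => //; rewrite /bump /= add1n ltnS (ltn_ord i).
rewrite -{1}(divnK hd) mulrnA -mulr_natr.
rewrite /bump /= add1n exprS.
rewrite mul1r mulrCA -(mulrnAr b) -mulr_natl mulrA -(mulr_natl _ q.+2) !mulrA.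
by rewrite mulr1 -!mulrA [in RHS]mulr_natl.
Qed.

Lemma dependent_choice_tower (A : nat -> Type) (P : forall k, A k -> Prop)
    (Rel : forall k, A k.+1 -> A k -> Prop) (a0 : A 0%N) :
  P 0%N a0 -> (forall k a, P k a -> exists a', P k.+1 a' /\ Rel k a' a) ->
  exists s : forall k, A k, s 0%N = a0 /\ forall k, P k (s k) /\ Rel k (s k.+1) (s k).
Proof.
move=> Pa0 step.
pose next k (a : {a | P k a}) :=
  constructive_indefinite_description _ (step k _ (proj2_sig a)).
pose fix s k : {a : A k | P k a} :=
  match k as k0 return {a : A k0 | P k0 a} with
  | 0 => exist _ a0 Pa0
  | k'.+1 => exist _ (proj1_sig (next k' (s k'))) (proj1 (proj2_sig (next k' (s k'))))
  end.
exists (fun k => proj1_sig (s k)); split => // k.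
exact: conj (proj2_sig (s k)) (proj2 (proj2_sig (next k (s k)))).
Qed.

Section Tower.
Variables (R : nat -> comPzRingType) (t : forall i, {rmorphism R i -> R i.+1}).
Variable varpi : R 0%N.

Local Notation varpi_at k := (tau0 t k varpi).
Local Notation I0 := (inI0 t varpi).
Local Notation "x = y %[modI0]" := (inI0 t varpi (x - y))
  (at level 70, y at next level).
Local Notation tor := (I0tor t varpi).

Lemma inI0_varpi k (r : R k) : I0 (varpi_at k * r). Proof. by exists r. Qed.
Lemma inI0_varpi_at k : I0 (varpi_at k). Proof. by exists 1; rewrite mulr1. Qed.
Lemma inI0_0 k : I0 (0 : R k). Proof. by exists 0; rewrite mulr0. Qed.
Lemma inI0D k (a b : R k) : I0 a -> I0 b -> I0 (a + b).
Proof. by move=> [r ->] [s ->]; exists (r + s); rewrite mulrDr. Qed.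
Lemma inI0N k (a : R k) : I0 a -> I0 (- a).
Proof. by move=> [r ->]; exists (- r); rewrite mulrN. Qed.
Lemma inI0B k (a b : R k) : I0 a -> I0 b -> I0 (a - b).
Proof. by move=> ha hb; apply: inI0D => //; apply: inI0N. Qed.
Lemma inI0Ml k (a b : R k) : I0 b -> I0 (a * b).
Proof. by move=> [r ->]; exists (a * r); rewrite mulrCA. Qed.
Lemma inI0Mr k (a b : R k) : I0 a -> I0 (a * b).
Proof. by move=> ha; rewrite mulrC; apply: inI0Ml. Qed.
Lemma inI0X k (a : R k) n : (0 < n)%N -> I0 a -> I0 (a ^+ n).
Proof. by case: n => // n _ ha; rewrite exprS; apply: inI0Mr. Qed.
Lemma inI0_sum k (I : Type) (r : seq I) (P : pred I) (F : I -> R k) :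
  (forall i, P i -> I0 (F i)) -> I0 (\sum_(i <- r | P i) F i).
Proof. by move=> h; apply: big_ind => //; [apply: inI0_0 | apply: inI0D]. Qed.
Lemma inI0_rmorph k (a : R k) : I0 a -> I0 (t k a).
Proof. by move=> [r ->]; exists (t k r); rewrite rmorphM. Qed.

Lemma modI0_refl k (a : R k) : a = a %[modI0].
Proof. by rewrite subrr; apply: inI0_0. Qed.
Lemma modI0_sym k (a b : R k) : a = b %[modI0] -> b = a %[modI0].
Proof. by move=> h; rewrite -opprB; apply: inI0N. Qed.
Lemma modI0_trans k (a b c : R k) : a = b %[modI0] -> b = c %[modI0] -> a = c %[modI0].
Proof. by move=> h1 h2; rewrite -(subrKA b a (- c)); apply: inI0D. Qed.
Lemma modI0D k (a b a' b' : R k) :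
  a = a' %[modI0] -> b = b' %[modI0] -> a + b = a' + b' %[modI0].
Proof. by move=> h1 h2; rewrite opprD addrACA; apply: inI0D. Qed.
Lemma modI0N k (a a' : R k) : a = a' %[modI0] -> - a = - a' %[modI0].
Proof. by move=> h; rewrite -opprD; apply: inI0N. Qed.
Lemma modI0B k (a b a' b' : R k) :
  a = a' %[modI0] -> b = b' %[modI0] -> a - b = a' - b' %[modI0].
Proof. by move=> h1 h2; apply: modI0D => //; apply: modI0N. Qed.
Lemma modI0M k (a b a' b' : R k) :
  a = a' %[modI0] -> b = b' %[modI0] -> a * b = a' * b' %[modI0].
Proof.
move=> h1 h2; have -> : a * b - a' * b' = a * (b - b') + (a - a') * b' by ring.
by apply: inI0D; [apply: inI0Ml | apply: inI0Mr].
Qed.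
Lemma modI0X k (a a' : R k) n : a = a' %[modI0] -> a ^+ n = a' ^+ n %[modI0].
Proof.
move=> h; elim: n => [|n IH]; first exact: modI0_refl.
by rewrite !exprS; apply: modI0M.
Qed.
Lemma modI0_rmorph k (a b : R k) : a = b %[modI0] -> t k a = t k b %[modI0].
Proof. by move=> h; rewrite -rmorphB; apply: inI0_rmorph. Qed.
Lemma modI0_inI0 k (a b : R k) : a = b %[modI0] -> I0 a <-> I0 b.
Proof.
move=> h; split=> [ha | hb]; last by rewrite -(subrK b a); apply: inI0D.
by rewrite -(subKr a b); apply: inI0B.
Qed.

Lemma tau0M k (a b : R 0%N) : tau0 t k (a * b) = tau0 t k a * tau0 t k b.
Proof. by elim: k => [|k IH] //=; rewrite IH rmorphM. Qed.
Lemma tau0_nat k n : tau0 t k n%:R = n%:R.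
Proof. by elim: k => [|k IH] //=; rewrite IH rmorph_nat. Qed.
Lemma tau1M k (a b : R 1%N) : tau1 t k (a * b) = tau1 t k a * tau1 t k b.
Proof. by elim: k => [|k IH] //=; rewrite IH rmorphM. Qed.
Lemma tau1X k (a : R 1%N) n : tau1 t k (a ^+ n) = tau1 t k a ^+ n.
Proof. by elim: k => [|k IH] //=; rewrite IH rmorphXn. Qed.
Lemma tau1_t0 k (a : R 0%N) : tau1 t k (t 0%N a) = tau0 t k.+1 a.
Proof. by elim: k => [|k IH] //=; rewrite IH. Qed.

Lemma inI0_nat k n : I0 (n%:R : R 0%N) -> I0 (n%:R : R k).
Proof. by case=> r /= hr; exists (tau0 t k r); rewrite -tau0M -hr tau0_nat. Qed.

Hypothesis I0_mul_tor : forall k (a x : R k), I0 a -> tor x -> a * x = 0.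

Lemma torP k (x : R k) : tor x <-> varpi_at k * x = 0.
Proof.
split=> [hx | hx a [r ->]]; first exact: I0_mul_tor (inI0_varpi_at k) hx.
by exists 1%N; rewrite expr1 mulrAC hx mul0r.
Qed.

Lemma tor0 k : tor (0 : R k). Proof. by apply/torP; rewrite mulr0. Qed.
Lemma torD k (x y : R k) : tor x -> tor y -> tor (x + y).
Proof. by move=> /torP hx /torP hy; apply/torP; rewrite mulrDr hx hy addr0. Qed.
Lemma torMl k (x y : R k) : tor x -> tor (y * x).
Proof. by move=> /torP hx; apply/torP; rewrite mulrCA hx mulr0. Qed.

Lemma tor_inI0_eq0 k (x : R k) : tor x -> I0 x -> x = 0.
Proof.
move=> /torP hx [r hr]; rewrite hr; apply/torP => a [s ->]; exists 2%N.
have -> : (varpi_at k * s) ^+ 2 * r = s ^+ 2 * (varpi_at k * (varpi_at k * r)) by ring.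
by rewrite -hr hx mulr0.
Qed.

Section Frobenius.
Variable p : nat.
Hypothesis p_prime : prime p.
Hypothesis p_inI0 : I0 (p%:R : R 0%N).

Local Notation Fr := (Frel t p varpi).
Local Notation tilt := (tilt_elt t p varpi).

Lemma frobD_modI0 k (a b : R k) : (a + b) ^+ p = a ^+ p + b ^+ p %[modI0].
Proof.
have [m ->] := exprD_prime a b p_prime.
by rewrite addrAC subrr add0r; apply/inI0Mr/inI0Mr/inI0_nat.
Qed.

Lemma frobN_modI0 k (a : R k) : (- a) ^+ p = - a ^+ p %[modI0].
Proof.
have := frobD_modI0 a (- a); rewrite subrr expr0n eqn0Ngt prime_gt0 //= sub0r.
by move/inI0N; rewrite !opprK [_ + a ^+ p]addrC.
Qed.

Lemma frobD_nilp_modI0 k (u v x : R k) :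
  I0 (x ^+ p) -> (u + (x + v)) ^+ p = u ^+ p + v ^+ p %[modI0].
Proof.
move=> hx; apply: modI0_trans (frobD_modI0 _ _) _.
apply: modI0D (modI0_refl _) _; apply: modI0_trans (frobD_modI0 _ _) _.
by rewrite addrK.
Qed.

Lemma Frel_modI0 k (x x' : R k.+1) (y y' : R k) :
  x = x' %[modI0] -> y = y' %[modI0] -> Fr x y -> Fr x' y'.
Proof.
move=> hx hy h; apply: modI0_trans (modI0_rmorph (modI0_sym hy)) _.
exact: modI0_trans h (modI0X p hx).
Qed.

Lemma FrelD k (x x' : R k.+1) (y y' : R k) :
  Fr x y -> Fr x' y' -> Fr (x + x') (y + y').
Proof.
move=> h1 h2; rewrite /Frel rmorphD.
exact: modI0_trans (modI0D h1 h2) (modI0_sym (frobD_modI0 _ _)).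
Qed.

Lemma FrelN k (x : R k.+1) (y : R k) : Fr x y -> Fr (- x) (- y).
Proof.
move=> h; rewrite /Frel rmorphN.
exact: modI0_trans (modI0N h) (modI0_sym (frobN_modI0 _)).
Qed.

Lemma FrelB k (x x' : R k.+1) (y y' : R k) :
  Fr x y -> Fr x' y' -> Fr (x - x') (y - y').
Proof. by move=> h1 h2; apply: FrelD => //; apply: FrelN. Qed.

Lemma FrelM k (x x' : R k.+1) (y y' : R k) :
  Fr x y -> Fr x' y' -> Fr (x * x') (y * y').
Proof. by move=> h1 h2; rewrite /Frel rmorphM exprMn; apply: modI0M. Qed.

Lemma FrelX k (x : R k.+1) (y : R k) n : Fr x y -> Fr (x ^+ n) (y ^+ n).
Proof. by move=> h; rewrite /Frel rmorphXn -exprM mulnC exprM; apply: modI0X. Qed.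

Lemma Frel0 k : Fr (0 : R k.+1) 0.
Proof. by rewrite /Frel rmorph0 expr0n eqn0Ngt prime_gt0 //= subrr; apply: inI0_0. Qed.

Lemma tilt_eltB x y : tilt x -> tilt y -> tilt (fun k => x k - y k).
Proof. by move=> hx hy k; apply: FrelB. Qed.

Lemma tilt_elt_expn_tau0 x k : tilt x -> x k ^+ (p ^ k) = tau0 t k (x 0%N) %[modI0].
Proof.
move=> hx; elim: k => [|k IH]; first by rewrite expn0 expr1; apply: modI0_refl.
rewrite expnS exprM; apply: modI0_trans (modI0X _ (modI0_sym (hx k))) _.
by rewrite -rmorphXn; apply: modI0_rmorph.
Qed.

Lemma tilt_elt_expn_tau1 x k : tilt x -> x k.+1 ^+ (p ^ k) = tau1 t k (x 1%N) %[modI0].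
Proof.
move=> hx; elim: k => [|k IH]; first by rewrite expn0 expr1; apply: modI0_refl.
rewrite expnS exprM; apply: modI0_trans (modI0X _ (modI0_sym (hx k.+1))) _.
by rewrite -rmorphXn; apply: modI0_rmorph.
Qed.

Section Preperfectoid.
Variable varpi1 : R 1%N.
Hypothesis t_inj : forall {k} (x : R k), I0 (t k x) -> I0 x.
Hypothesis F_total : forall {k} (x : R k.+1), exists y, Fr x y.
Hypothesis F_surj : forall {k} (y : R k), exists x : R k.+1, Fr x y.
Hypothesis varpi1X_inI0 : exists r, varpi1 ^+ p = t 0%N varpi * r.
Hypothesis varpi_dvd_varpi1X : exists r, t 0%N varpi = varpi1 ^+ p * r.
Hypothesis kerF : forall {k} (x : R k.+1),
  Fr x 0 -> exists z, inI1 t varpi1 z /\ x = z %[modI0].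
Variable G : forall k, R k.+1 -> R k.
Arguments G : clear implicits.
Hypothesis G_tor : forall {k} (x : R k.+1), tor x -> tor (G k x).
Hypothesis G_inj : forall {k} (x1 x2 : R k.+1), tor x1 -> tor x2 -> G k x1 = G k x2 -> x1 = x2.
Hypothesis G_surj : forall {k} (y : R k), tor y -> exists x, tor x /\ G k x = y.
Hypothesis Frel_G : forall {k} (x : R k.+1), tor x -> Fr x (G k x).

Local Notation I0flat := (in_I0flat t p varpi).

Lemma Frel_uniq k (x : R k.+1) (y y' : R k) : Fr x y -> Fr x y' -> y = y' %[modI0].
Proof. by move=> h1 h2; apply: t_inj; rewrite rmorphB; apply: modI0_trans h1 (modI0_sym h2). Qed.

Lemma tilt_elt_inI0_0 z j : tilt z -> I0 (z j) -> I0 (z 0%N).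
Proof.
move=> hz; elim: j => [|j IH] // hzj; apply/IH/t_inj.
by apply/(modI0_inI0 (hz j)); apply: inI0X hzj; apply: prime_gt0.
Qed.

Lemma G_inI0_eq0 k (x : R k.+1) : tor x -> I0 (G k x) -> x = 0.
Proof.
move=> hx hGx; have tor00 := tor0 (k := k.+1).
have hG0 : I0 (G k 0) by have := Frel_uniq (Frel_G tor00) (Frel0 k); rewrite subr0.
apply: (G_inj hx tor00).
by rewrite (tor_inI0_eq0 (G_tor hx) hGx) (tor_inI0_eq0 (G_tor tor00) hG0).
Qed.

Lemma Frel_mul_tor_eq0 k (x y : R k.+1) (y' : R k) :
  tor x -> Fr y y' -> I0 (y' * G k x) -> y * x = 0.
Proof.
move=> hx hy hyx; have hyx_tor : tor (y * x) by apply: torMl hx.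
apply: (G_inI0_eq0 hyx_tor).
by apply/(modI0_inI0 (Frel_uniq (Frel_G hyx_tor) (FrelM hy (Frel_G hx)))).
Qed.

Lemma exists_varpi_flat : exists w, tilt w /\ w 0%N = varpi /\ w 1%N = varpi1.
Proof.
have step k (a : R k.+1) : True -> exists a', True /\ Fr a' a.
  by move=> _; have [a' ha'] := F_surj a; exists a'.
have [s [s0 hs]] := dependent_choice_tower (A := fun k => R k.+1)
  (Rel := fun k a' a => Fr a' a) (a0 := varpi1) I step.
exists (fun k => match k as k0 return R k0 with 0 => varpi | k'.+1 => s k' end).
split=> // [[|k]]; last exact: (hs k).2.
have [r hr] := varpi1X_inI0; rewrite /= s0.
by apply: inI0B; [apply: (inI0_varpi_at 1) | exists r].
Qed.

Section VarpiFlat.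
Variable w : forall k, R k.
Hypothesis w_tilt : tilt w.
Hypothesis w0 : w 0%N = varpi.
Hypothesis w1 : w 1%N = varpi1.

Lemma w_expn_inI0 k : I0 (w k ^+ (p ^ k)).
Proof. by apply/(modI0_inI0 (tilt_elt_expn_tau0 k w_tilt)); rewrite w0; apply: inI0_varpi_at. Qed.

Lemma w_expn_ge_inI0 k n : (p ^ k <= n)%N -> I0 (w k ^+ n).
Proof. by move=> h; rewrite -(subnK h) exprD; apply/inI0Ml/w_expn_inI0. Qed.

Lemma tau1_varpi1_modI0 k : tau1 t k varpi1 = w k.+1 ^+ (p ^ k) %[modI0].
Proof. by rewrite -w1; apply/modI0_sym/tilt_elt_expn_tau1. Qed.

Lemma varpi_at_w_expn k :
  exists s v, varpi_at k = w k ^+ (p ^ k) * s + varpi_at k ^+ 2 * v.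
Proof.
case: k => [|k]; first by exists 1, 0; rewrite w0 expn0 expr1 mulr1 mulr0 addr0.
have [r hr] := varpi_dvd_varpi1X.
have [q hq] := tau1_varpi1_modI0 k.
have [c hc] := inI0_nat k.+1 p_inI0.
set W := w k.+1 ^+ (p ^ k) in hq.
have e1 : varpi_at k.+1 = (W + varpi_at k.+1 * q) ^+ p * tau1 t k r.
  by rewrite -{1}tau1_t0 hr tau1M tau1X -hq addrC subrK.
have [m hm] := exprD_prime W (varpi_at k.+1 * q) p_prime.
have hpq : (varpi_at k.+1 * q) ^+ p = varpi_at k.+1 ^+ 2 * (varpi_at k.+1 ^+ (p - 2) * q ^+ p).
  by rewrite exprMn -{1}(subnK (prime_gt1 p_prime)) exprD; ring.
exists (tau1 t k r), ((varpi_at k.+1 ^+ (p - 2) * q ^+ p + c * q * m) * tau1 t k r).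
by rewrite {1}e1 hm hpq hc /W -exprM -expnSr; ring.
Qed.

(* With [P := w k ^+ p ^ k = varpi_at k * u] and [varpi_at k = P * s + varpi_at k ^+ 2 * v],
   both summands of [tau] below are killed by [varpi_at k]. *)
Lemma w_expn_colon k n d : (n <= p ^ k)%N -> I0 (w k ^+ n * d) ->
  exists a tau, tor tau /\ d = w k ^+ (p ^ k - n) * a + tau %[modI0].
Proof.
move=> hn [r hr]; have [u hu] := w_expn_inI0 k; have [s [v hv]] := varpi_at_w_expn k.
have hW : w k ^+ (p ^ k) = w k ^+ (p ^ k - n) * w k ^+ n by rewrite -exprD subnK.
set E := w k ^+ (p ^ k - n) in hW *; set N := w k ^+ n in hr hW.
set P := w k ^+ (p ^ k) in hu hv hW.
exists (s * r), (s * (u * d - E * r) + (1 - u * s - varpi_at k * v) * d); split.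
  apply: torD; last (rewrite mulrC; apply: torMl); apply/torP.
    have -> : varpi_at k * (s * (u * d - E * r)) =
      s * ((varpi_at k * u) * d - E * (varpi_at k * r)) by ring.
    by rewrite -hu -hr hW mulrA subrr mulr0.
  have -> : varpi_at k * (1 - u * s - varpi_at k * v) =
    varpi_at k - (varpi_at k * u) * s - varpi_at k ^+ 2 * v by ring.
  by rewrite -hu {1}hv; ring.
have -> : d - (E * (s * r) + (s * (u * d - E * r) + (1 - u * s - varpi_at k * v) * d)) =
  varpi_at k * (v * d) by ring.
exact: inI0_varpi.
Qed.

Lemma I0flat_dvd_w_at z : I0flat z -> forall k, exists s, z k = w k * s %[modI0].
Proof.
move=> [hz [r hr]]; elim=> [|k [s hs]]; first by exists r; rewrite w0 hr subrr; apply: inI0_0.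
have [s' hs'] := F_surj s.
have /kerF [y [[r' ->] hy]] : Fr (z k.+1 - w k.+1 * s') 0.
  apply: Frel_modI0 (FrelB (hz k) (FrelM (w_tilt k) hs')); first exact: modI0_refl.
  by rewrite subr0.
have wX : w k.+1 ^+ (p ^ k) = w k.+1 * w k.+1 ^+ (p ^ k).-1.
  by rewrite -exprS prednK // expn_gt0 prime_gt0.
exists (s' + w k.+1 ^+ (p ^ k).-1 * r').
have -> : z k.+1 - w k.+1 * (s' + w k.+1 ^+ (p ^ k).-1 * r') =
  (z k.+1 - w k.+1 * s' - tau1 t k varpi1 * r') +
  (tau1 t k varpi1 - w k.+1 ^+ (p ^ k)) * r' by rewrite wX; ring.
by apply: inI0D => //; apply/inI0Mr/tau1_varpi1_modI0.
Qed.

Lemma I0flat_prod_dvd_w_expn_at N (a : 'I_N -> forall k, R k) k :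
  (forall j, I0flat (a j)) -> exists s, \prod_(j < N) a j k = w k ^+ N * s %[modI0].
Proof.
elim: N a => [|N IH] a ha.
  by exists 1; rewrite big_ord0 mulr1 subrr; apply: inI0_0.
have [s hs] := IH (fun j => a (widen_ord (leqnSn N) j)) (fun j => ha _).
have [s' hs'] := I0flat_dvd_w_at (ha ord_max) k.
exists (s * s'); rewrite big_ord_recr exprSr -mulrACA.
exact: modI0M hs hs'.
Qed.

Lemma I0flat_pow_inI0 k z : in_I0flat_pow t p varpi (p ^ k) z -> I0 (z k).
Proof.
case=> m [c [a [_ [ha hz]]]]; apply/(modI0_inI0 (hz k)) => /=.
apply: inI0_sum => j _; apply: inI0Ml.
have [s hs] := I0flat_prod_dvd_w_expn_at k (ha j).
by apply/(modI0_inI0 hs); apply/inI0Mr/w_expn_inI0.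
Qed.

Lemma w_mul_descend z k (e : R k.+1) (c : R k) :
  tilt z -> Fr e c -> z k.+1 = w k.+1 * e %[modI0] -> z k = w k * c %[modI0].
Proof.
move=> hz hec hze; apply: Frel_uniq (hz k) _.
exact: Frel_modI0 (modI0_sym hze) (modI0_refl _) (FrelM (w_tilt k) hec).
Qed.

Lemma tor_lift_w_expn k m (x : R k) : tor x -> I0 (w k ^+ m * x) ->
  exists x', tor x' /\ G k x' = x /\ w k.+1 ^+ m * x' = 0.
Proof.
move=> hx hwx; have [x' [hx' hGx']] := G_surj hx.
exists x'; split=> //; split=> //.
by apply: (Frel_mul_tor_eq0 hx' (FrelX m (w_tilt k))); rewrite hGx'.
Qed.

Lemma tor_tilt_lift m (x0 : R 0%N) : tor x0 ->
  exists x, tilt x /\ x 0%N = x0 /\ forall k, w k ^+ m.+1 * x k = 0.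
Proof.
move=> hx0; have hwx0 : w 0%N ^+ m.+1 * x0 = 0.
  by rewrite exprSr -mulrA w0; have /torP /= -> := hx0; rewrite mulr0.
have step k (x : R k) : tor x /\ w k ^+ m.+1 * x = 0 ->
    exists x', (tor x' /\ w k.+1 ^+ m.+1 * x' = 0) /\ Fr x' x.
  move=> [hx hwx]; have [|x' [hx' [hGx' hwx']]] := tor_lift_w_expn hx (m := m.+1).
    by rewrite hwx; apply: inI0_0.
  by exists x'; rewrite -hGx'; split; last exact: Frel_G.
have [x [x00 hx]] := dependent_choice_tower (A := fun k => R k) (Rel := fun k x' x => Fr x' x)
  (conj hx0 hwx0) step.
by exists x; split; [move=> k; case: (hx k) | split=> // k; case: (hx k) => -[]].
Qed.

Lemma w_annihilator k d : I0 (w k * d) ->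
  exists a tau, tor tau /\ I0 (w k * tau) /\ d = w k ^+ (p ^ k).-1 * a + tau %[modI0].
Proof.
move=> hwd; have wX : w k * w k ^+ (p ^ k).-1 = w k ^+ (p ^ k).
  by rewrite -exprS prednK // expn_gt0 prime_gt0.
have [a [tau [htau hd]]] : exists a tau, tor tau /\ d = w k ^+ (p ^ k).-1 * a + tau %[modI0].
  by rewrite -subn1; apply: w_expn_colon; rewrite ?expr1 // expn_gt0 prime_gt0.
exists a, tau; split=> //; split=> //.
have -> : w k * tau =
  w k * d - w k ^+ (p ^ k) * a - w k * (d - (w k ^+ (p ^ k).-1 * a + tau)) by rewrite -wX; ring.
by apply: inI0B; [apply: inI0B => //; apply/inI0Mr/w_expn_inI0 | apply: inI0Ml].
Qed.

(* [e] and [F(e2)] both divide [z k.+1] by [w k.+1]; their difference is a multiple of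
   [w k.+1 ^+ (p ^ k.+1).-1], which vanishes after one more Frobenius, plus a torsion term,
   which is cancelled by adding to [e2] its torsion lift [tau'], killed by [w k.+2]. *)
Lemma w_quotient_step z k (c : R k) (e : R k.+1) : I0flat z ->
  z k.+1 = w k.+1 * e %[modI0] -> Fr e c ->
  exists c' (e' : R k.+2), (z k.+2 = w k.+2 * e' %[modI0] /\ Fr e' c') /\ Fr c' c.
Proof.
move=> hz hze hec.
have [e2 hze2] := I0flat_dvd_w_at hz k.+2.
have [f hef] := F_total e2.
have hwd : I0 (w k.+1 * (e - f)).
  by rewrite mulrBr; apply: modI0_trans (modI0_sym hze) (w_mul_descend hz.1 hef hze2).
have [a [tau [htau [hwtau hd]]]] := w_annihilator hwd.
rewrite -[w k.+1]expr1 in hwtau.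
have [tau' [htau' [hGtau' hwtau']]] := tor_lift_w_expn htau hwtau.
rewrite expr1 in hwtau'.
have [c' hc'] := F_total (e2 + tau').
exists c', (e2 + tau'); split; first by split=> //; rewrite mulrDr hwtau' addr0.
set N := (p ^ k.+1).-1 in hd.
have hte : t k.+1 e = e2 ^+ p + (t k.+1 (w k.+1 ^+ N * a) + tau' ^+ p) %[modI0].
  rewrite -[e](subrKC f) rmorphD; apply: modI0D => //.
  apply: modI0_trans (modI0_rmorph hd) _.
  by rewrite rmorphD -hGtau'; apply: modI0D; [apply: modI0_refl | apply: Frel_G].
have hN : I0 (t k.+1 (w k.+1 ^+ N * a) ^+ p).
  rewrite -rmorphXn exprMn -exprM; apply/inI0_rmorph/inI0Mr/w_expn_ge_inI0.
  have : (p <= p ^ k.+1)%N by rewrite -{1}(expn1 p) leq_pexp2l // prime_gt0.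
  by have := prime_gt1 p_prime; rewrite /N; nia.
apply: t_inj; rewrite /= rmorphB rmorphXn.
apply: modI0_trans (modI0_rmorph hec) _; rewrite rmorphXn.
apply: modI0_trans (modI0X p hte) _; apply: modI0_trans (frobD_nilp_modI0 _ _ hN) _.
apply: modI0_sym; apply: modI0_trans (modI0X p hc') _.
exact: modI0_trans (modI0X p (frobD_modI0 _ _)) (frobD_modI0 _ _).
Qed.

Lemma I0flat_dvd_w z : I0flat z ->
  exists c, tilt c /\ forall k, z k = w k * c k %[modI0].
Proof.
move=> hz; have [e he] := I0flat_dvd_w_at hz 1; have [c hec] := F_total e.
have step k (ce : R k * R k.+1) :
    z k.+1 = w k.+1 * ce.2 %[modI0] /\ Fr ce.2 ce.1 ->
    exists ce', (z k.+2 = w k.+2 * ce'.2 %[modI0] /\ Fr ce'.2 ce'.1) /\ Fr ce'.1 ce.1.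
  by case=> hze hec'; have [c' [e' ?]] := w_quotient_step hz hze hec'; exists (c', e').
have [s [_ hs]] := dependent_choice_tower (A := fun k => (R k * R k.+1)%type)
  (Rel := fun k ce' ce => Fr ce'.1 ce.1) (a0 := (c, e)) (conj he hec) step.
exists (fun k => (s k).1); split=> k; first exact: (hs k).2.
by have [[hze hec'] _] := hs k; apply: w_mul_descend hz.1 hec' hze.
Qed.

Lemma tor_descend_to_0 e c j : (0 < e)%N -> tilt c ->
  (exists a tau, tor tau /\ c j = w j ^+ e * a + tau %[modI0]) ->
  exists tau, tor tau /\ c 0%N = tau %[modI0].
Proof.
move=> e_gt0 hc; elim: j => [|j IH] [a [tau [htau hca]]].
  exists tau; split=> //.
  have -> : c 0%N - tau = c 0%N - (w 0%N ^+ e * a + tau) + w 0%N ^+ e * a by ring.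
  by apply: inI0D hca _; apply/inI0Mr/w_expn_ge_inI0; rewrite expn0.
apply: IH; have [a' ha'] := F_total a.
exists a', (G j tau); split; first exact: G_tor.
apply: Frel_uniq (hc j) _; apply: Frel_modI0 (modI0_sym hca) (modI0_refl _) _.
by apply: FrelD (Frel_G htau); apply: FrelM ha'; apply: FrelX.
Qed.

Lemma inI0_w_expn_dvd z i n : tilt z -> I0 (z i) -> (n < p ^ i)%N ->
  exists c, tilt c /\ forall k, z k = w k ^+ n.+1 * c k %[modI0].
Proof.
move=> hz hzi; elim: n => [|n IH] hn.
  have [c [hc hzc]] := I0flat_dvd_w (conj hz (tilt_elt_inI0_0 hz hzi)).
  by exists c; split=> // k; rewrite expr1.
have [c [hc hzc]] := IH (ltnW hn).
have hci := (modI0_inI0 (hzc i)).1 hzi.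
have e_gt0 : (0 < p ^ i - n.+1)%N by rewrite subn_gt0.
have [tau0 [htau0 hc0]] := tor_descend_to_0 e_gt0 hc (w_expn_colon (ltnW hn) hci).
have [tau [htau [htau_0 hwtau]]] := tor_tilt_lift n htau0.
have hctau : I0 (c 0%N - tau 0%N) by rewrite htau_0.
have [c' [hc' hcc']] := I0flat_dvd_w (conj (tilt_eltB hc htau) hctau).
exists c'; split=> // k; apply: modI0_trans (hzc k) _.
rewrite -[c k](subrK (tau k)) mulrDr hwtau addr0 [w k ^+ n.+2]exprSr -mulrA.
exact: modI0M (modI0_refl _) (hcc' k).
Qed.

Lemma inI0_I0flat_pow i z : tilt z -> I0 (z i) -> in_I0flat_pow t p varpi (p ^ i) z.
Proof.
move=> hz hzi; have p_i_gt0 : (0 < p ^ i)%N by rewrite expn_gt0 prime_gt0.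
have [c [hc hzc]] := inI0_w_expn_dvd (n := (p ^ i).-1) hz hzi ltac:(by rewrite ltn_predL).
exists 1%N, (fun _ => c), (fun _ _ => w); split=> //; split=> [_ _ | k].
  by split=> //; rewrite w0; apply: inI0_varpi_at.
by rewrite big_ord1 prodr_const card_ord mulrC -(prednK p_i_gt0); apply: hzc.
Qed.

End VarpiFlat.

Lemma I0flat_pow_frob_inj i (x y : forall k, R k) : tilt x -> tilt y ->
  in_I0flat_pow t p varpi (p ^ i.+1) (fun k => x k ^+ p - y k ^+ p) ->
  in_I0flat_pow t p varpi (p ^ i) (fun k => x k - y k).
Proof.
move=> hx hy hxy; have [w [w_tilt [w0 w1]]] := exists_varpi_flat.
apply: (inI0_I0flat_pow w_tilt w0 w1 (tilt_eltB hx hy)); apply: t_inj.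
rewrite rmorphB; apply/(modI0_inI0 (modI0B (hx i) (hy i))).
exact: (I0flat_pow_inI0 w_tilt w0 w1 hxy).
Qed.

End Preperfectoid.
End Frobenius.
End Tower.

Theorem lemma2p10 (p : nat) (R : nat -> comPzRingType)
    (t : forall i, {rmorphism R i -> R i.+1}) (varpi : R 0%N) :
  prime p ->
  preperfectoid_tower t p varpi ->
  forall (i : nat) (x y : forall k, R k),
    tilt_elt t p varpi x -> tilt_elt t p varpi y ->
    in_I0flat_pow t p varpi (p ^ i.+1) (fun k => x k ^+ p - y k ^+ p) ->
    in_I0flat_pow t p varpi (p ^ i) (fun k => x k - y k).
Proof.
move=> p_prime [[p_inI0 [t_inj F_total]] [F_surj [[varpi1 [[varpi1X varpi_dvd] kerF]] htor]]].
have G_spec k := proj2_sig (constructive_indefinite_description _ (htor k).2).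
exact: (I0flat_pow_frob_inj (fun k => (htor k).1) p_prime p_inI0 t_inj F_total F_surj
  varpi1X varpi_dvd (fun k x => (kerF k x).1) (fun k => (G_spec k).1)
  (fun k => (G_spec k).2.1) (fun k => (G_spec k).2.2.1) (fun k => (G_spec k).2.2.2)).
Qed.
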